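(* Let $c\neq-\frac{22}{5}$. For all integers $n\ge1$, the following identity holds in $\mathcal{W}^c_3$: $$U_{0,0}\circ_0\partial^{n-1}W-\frac{64}{22+5c}\partial^n(:LLW:)+\frac{64}{22+5c}\partial^{n-1}(:(\partial L)LW:)-\frac{10(14+c)}{3(22+5c)}\partial^{n+2}(:LW:)$$ $$+\frac{86+5c}{22+5c}\partial^{n+1}(:(\partial L)W:)-\frac{26+3c}{22+5c}\partial^n(:(\partial^2L)W:)+\frac{2(c-2)}{3(22+5c)}\partial^{n-1}(:(\partial^3L)W:)-\frac{-186+11c+c^2}{36(22+5c)}\partial^{n+4}W=0.$$
   Context: For vertex algebra elements, $a(z)b(w)\sim\sum_{n\ge0}(a\circ_nb)(w)(z-w)^{-n-1}$ and $:ab:$ is the normally ordered product; iterated products are nested to the right, e.g. $:LLW:=\,:L(:LW:):$. For $c\ne-\frac{22}{5}$, $\mathcal{W}^c_3$ is the vertex algebra strongly generated by a Virasoro field $L$ and a weight $3$ primary field $W$ with OPEs $L(z)L(w)\sim \frac c2(z-w)^{-4}+2L(w)(z-w)^{-2}+\partial L(w)(z-w)^{-1}$, $L(z)W(w)\sim 3W(w)(z-w)^{-2}+\partial W(w)(z-w)^{-1}$, $W(z)W(w)\sim \frac c3(z-w)^{-6}+2L(w)(z-w)^{-4}+\partial L(w)(z-w)^{-3}+\big(\frac{32}{22+5c}:LL:+\frac{3(c-2)}{2(22+5c)}\partial^2L\big)(w)(z-w)^{-2}+\big(\frac{32}{22+5c}:(\partial L)L:+\frac{c-2}{3(22+5c)}\partial^3L\big)(w)(z-w)^{-1}$.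 $U_{0,0}=\,:WW:$. *)

From HB Require Import structures.
From mathcomp Require Import all_boot all_order all_algebra.
Set Implicit Arguments. Unset Strict Implicit. Unset Printing Implicit Defensive.
Import Order.TTheory GRing.Theory Num.Theory.
Local Open Scope ring_scope.

Definition binz (m : int) (j : nat) : int :=
  if (0 <= m) then ('C(absz m, j))%:Z
  else (-1) ^+ j * ('C(j + absz m - 1, j))%:Z.

Section VA.
Variables (K : fieldType) (V : lmodType K).
Variables (vac : V) (prod : int -> V -> V -> V).
(* prod n a b  =  a_(n) b  =  a \circ_n b *)

Definition vD (a : V) : V := prod (-2) a vac.
Definition vNO (a b : V) : V := prod (-1) a b.

Definition vertex_algebra : Prop :=
  [/\
      (forall n k a b x, prod n (k *: a + b) x = k *: prod n a x + prod n b x),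
      (forall n k a x y, prod n a (k *: x + y) = k *: prod n a x + prod n a y),
      (forall a b, exists N : int, forall n, N <= n -> prod n a b = 0),
      (forall a, prod (-1) a vac = a) /\
      (forall a n, 0 <= n -> prod n a vac = 0) /\
      (forall a n, prod n vac a = if n == -1 then a else 0)
    &
      (forall a b x (m n k : int) (N : nat),
         (forall j : nat, (N <= j)%N ->
            [/\ prod (n + j%:Z) a b = 0, prod (k + j%:Z) b x = 0
              & prod (m + j%:Z) a x = 0]) ->
         \sum_(j < N) (binz m j)%:~R *: prod (m + k - j%:Z) (prod (n + j%:Z) a b) x
         = \sum_(j < N) ((-1) ^+ j * binz n j)%:~R *:
              (prod (m + n - j%:Z) a (prod (k + j%:Z) b x)
               - (-1) ^+ (absz n) *: prod (n + k - j%:Z) b (prod (m + j%:Z) a x)))].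

(* V is strongly generated by gens: spanned by |0> and the normally ordered
   monomials :(\partial^{i1} g1)(:(\partial^{i2} g2)( ... |0>)...):. *)
Definition strongly_generated (gens : seq V) : Prop :=
  forall P : V -> Prop,
    P vac ->
    (forall u v, P u -> P v -> P (u + v)) ->
    (forall k u, P u -> P (k *: u)) ->
    (forall g i u, g \in gens -> P u -> P (vNO (iter i vD g) u)) ->
    forall v, P v.

(* The OPEs defining W_3^c, written through the products a \circ_n b. *)
Definition W3_relations (c : K) (L W : V) : Prop :=
  [/\
      [/\ prod 3 L L = (c / 2%:R) *: vac, prod 2 L L = 0,
          prod 1 L L = 2%:R *: L, prod 0 L L = vD L
        & forall n, 4 <= n -> prod n L L = 0],
      [/\ prod 1 L W = 3%:R *: W, prod 0 L W = vD W
        & forall n, 2 <= n -> prod n L W = 0]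
    &
      [/\ [/\ prod 5 W W = (c / 3%:R) *: vac, prod 4 W W = 0,
          prod 3 W W = 2%:R *: L & prod 2 W W = vD L],
          prod 1 W W = (32%:R / (22%:R + 5%:R * c)) *: vNO L L
                       + (3%:R * (c - 2%:R) / (2%:R * (22%:R + 5%:R * c))) *: iter 2 vD L,
          prod 0 W W = (32%:R / (22%:R + 5%:R * c)) *: vNO (vD L) L
                       + ((c - 2%:R) / (3%:R * (22%:R + 5%:R * c))) *: iter 3 vD L
        & forall n, 6 <= n -> prod n W W = 0]].

End VA.

(* Borcherds' identity with (m, n, k) = (0, p, -2) shows that zero modes commute with
   the translation operator D, so the left-hand side for n is D^(n-1) applied to the
   left-hand side for n = 1, and only n = 1 needs a computation. There the zero mode
   of :WW: acting on W is expanded by the Wick formula into creation modes of W applied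
   to the products W_(j)W, which the OPE expresses through L. Since L is a Virasoro
   field for which L and W are primary, its creation modes can be commuted to the left;
   every term then becomes a combination of the same seven ordered monomials in the
   creation modes of L and W applied to the vacuum, and the seven coefficients vanish
   identically in c. *)

From HB Require Import structures.
From mathcomp Require Import all_boot all_order all_algebra.
From mathcomp Require Import zify ring.
Set Implicit Arguments. Unset Strict Implicit. Unset Printing Implicit Defensive.
Import Order.TTheory GRing.Theory Num.Theory.
Local Open Scope ring_scope.

Section LinComb.
Variables (R : pzRingType) (V : lmodType R) (n : nat) (v : 'I_n -> V).

Definition lincomb (r : 'rV[R]_n) : V := \sum_i r 0 i *: v i.

Lemma lincombD r s : lincomb (r + s) = lincomb r + lincomb s.
Proof. by rewrite /lincomb -big_split; apply: eq_bigr => i _; rewrite mxE scalerDl. Qed.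

Lemma lincombZ k r : lincomb (k *: r) = k *: lincomb r.
Proof. by rewrite /lincomb scaler_sumr; apply: eq_bigr => i _; rewrite mxE scalerA. Qed.

Lemma lincombN r : lincomb (- r) = - lincomb r.
Proof. by rewrite /lincomb -sumrN; apply: eq_bigr => i _; rewrite mxE scaleNr. Qed.

Lemma lincomb_delta i : lincomb (delta_mx 0 i) = v i.
Proof.
rewrite /lincomb (bigD1 i) //= big1 => [|j /negbTE nji]; last by rewrite mxE nji scale0r.
by rewrite mxE !eqxx scale1r addr0.
Qed.

Lemma lincomb0 : lincomb 0 = 0.
Proof. by rewrite /lincomb big1 // => i _; rewrite mxE scale0r. Qed.

End LinComb.

Lemma binz0n j : binz 0 j = (j == 0)%N.
Proof. by rewrite /binz lexx bin0n. Qed.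

Lemma binz0 m : binz m 0 = 1.
Proof. by rewrite /binz; case: ifP; rewrite bin0 ?expr0 ?mul1r. Qed.

Lemma binz1 m : binz m 1 = m.
Proof.
rewrite /binz; case: ifP => m_ge0; rewrite bin1; first by rewrite gez0_abs.
by rewrite expr1 mulN1r; move: m_ge0; lia.
Qed.

Lemma binzN1 j : binz (-1) j = (-1) ^+ j.
Proof. by rewrite /binz /= addn1 subn1 /= binn mulr1. Qed.

Lemma binzN2 j : binz (-2) j = (-1) ^+ j * j.+1%:Z.
Proof. by rewrite /binz /= addn2 subn1 /= binSn. Qed.

Lemma big_ord_trunc (V : nmodType) (N M : nat) (F : nat -> V) : (M <= N)%N ->
  (forall j, (M <= j)%N -> F j = 0) -> \sum_(j < N) F j = \sum_(j < M) F j.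
Proof.
move=> leMN F0; rewrite -!(big_mkord xpredT) (big_cat_nat (leq0n M) leMN) /=.
rewrite [X in _ + X]big1_seq ?addr0 // => j /andP[_].
by rewrite mem_index_iota => /andP[/F0].
Qed.

Section VertexAlgebra.
Variables (K : fieldType) (V : lmodType K) (vac : V) (prod : int -> V -> V -> V).
Hypothesis HVA : vertex_algebra vac prod.
Local Notation D := (vD vac prod).

Lemma prodDl n a b x : prod n (a + b) x = prod n a x + prod n b x.
Proof. by case: HVA => linl _ _ _ _; have := linl n 1 a b x; rewrite !scale1r. Qed.

Lemma prodDr n a x y : prod n a (x + y) = prod n a x + prod n a y.
Proof. by case: HVA => _ linr _ _ _; have := linr n 1 a x y; rewrite !scale1r. Qed.

Lemma prod0l n x : prod n 0 x = 0.
Proof.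
by case: HVA => linl _ _ _ _; have := linl n (-1) x x x; rewrite !scaleN1r !addNr.
Qed.

Lemma prod0r n a : prod n a 0 = 0.
Proof.
by case: HVA => _ linr _ _ _; have := linr n (-1) a a a; rewrite !scaleN1r !addNr.
Qed.

Lemma prodZl n k a x : prod n (k *: a) x = k *: prod n a x.
Proof.
by case: HVA => linl _ _ _ _; have := linl n k a 0 x; rewrite !addr0 prod0l addr0.
Qed.

Lemma prodZr n k a x : prod n a (k *: x) = k *: prod n a x.
Proof.
by case: HVA => _ linr _ _ _; have := linr n k a x 0; rewrite !addr0 prod0r addr0.
Qed.

Lemma prodNl n a x : prod n (- a) x = - prod n a x.
Proof. by rewrite -scaleN1r prodZl scaleN1r. Qed.

Lemma prodNr n a x : prod n a (- x) = - prod n a x.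
Proof. by rewrite -scaleN1r prodZr scaleN1r. Qed.

Lemma prod_trunc a b : exists N : int, forall n, N <= n -> prod n a b = 0.
Proof. by case: HVA. Qed.

Lemma prodN1_vac a : prod (-1) a vac = a.
Proof. by case: HVA => _ _ _ []. Qed.

Lemma prod_vac_ge0 a n : 0 <= n -> prod n a vac = 0.
Proof. by case: HVA => _ _ _ [_ [vac_ge0 _]] _; apply: vac_ge0. Qed.

Lemma prod_vacl a n : prod n vac a = if n == -1 then a else 0.
Proof. by case: HVA => _ _ _ [_ [_ vacl]] _; apply: vacl. Qed.

Lemma vD_vac : D vac = 0.
Proof. exact: prod_vacl. Qed.

Lemma vDD x y : D (x + y) = D x + D y. Proof. exact: prodDl. Qed.
Lemma vDZ k x : D (k *: x) = k *: D x. Proof. exact: prodZl. Qed.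
Lemma vDN x : D (- x) = - D x. Proof. exact: prodNl. Qed.
Lemma vD0 : D 0 = 0. Proof. exact: prod0l. Qed.

Definition borcherds_lterm a b x (m n k : int) (j : nat) :=
  (binz m j)%:~R *: prod (m + k - j%:Z) (prod (n + j%:Z) a b) x.
Definition borcherds_rterm a b x (m n k : int) (j : nat) :=
  ((-1) ^+ j * binz n j)%:~R *:
    (prod (m + n - j%:Z) a (prod (k + j%:Z) b x)
     - (-1) ^+ (absz n) *: prod (n + k - j%:Z) b (prod (m + j%:Z) a x)).

Lemma borcherds a b x (m n k : int) (N : nat) :
  (forall j : nat, (N <= j)%N ->
     [/\ prod (n + j%:Z) a b = 0, prod (k + j%:Z) b x = 0
       & prod (m + j%:Z) a x = 0]) ->
  \sum_(j < N) borcherds_lterm a b x m n k j = \sum_(j < N) borcherds_rterm a b x m n k j.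
Proof. by case: HVA => _ _ _ _; apply. Qed.

Lemma borcherds_lterm_m0 a b x n k j : (1 <= j)%N -> borcherds_lterm a b x 0 n k j = 0.
Proof. by rewrite /borcherds_lterm binz0n; case: j => // j _; rewrite scale0r. Qed.

Lemma D_prod p a y : D (prod p a y) = prod p a (D y) - p%:~R *: prod (p - 1) a y.
Proof.
have [N aN] := prod_trunc a y.
have rhs_trunc j : (2 <= j)%N -> borcherds_rterm a y vac 0 p (-2) j = 0.
  move=> j_ge2; rewrite /borcherds_rterm !prod_vac_ge0 ?prod0r ?scaler0 ?subr0 ?scaler0 //;
    lia.
have := @borcherds a y vac 0 p (-2) (maxn (absz (N - p)) 2) (fun j Hj =>
  ltac:(split; [apply: aN; lia | apply: prod_vac_ge0; lia | apply: prod_vac_ge0; lia])).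
rewrite (big_ord_trunc _ (@borcherds_lterm_m0 _ _ _ _ _)) ?big_ord1; last lia.
rewrite (big_ord_trunc _ rhs_trunc); last lia.
rewrite big_ord_recr big_ord1 /borcherds_lterm /borcherds_rterm /= binz0n binz0 binz1.
rewrite expr0 expr1 !mul1r mulN1r !add0r !addr0 ?subr0 !(@prod_vac_ge0 a) //.
rewrite !prod0r !scaler0 !subr0 (_ : -2 + 1 = -1) // prodN1_vac mulr1z !scale1r.
by rewrite mulrNz scaleNr /vD => <-.
Qed.

Lemma prod_D_Negz a x i : prod (Negz i) (D a) x = i.+1%:R *: prod (Negz i.+1) a x.
Proof.
have [N aN] := prod_trunc a x.
have rhsE j : borcherds_rterm a vac x 0 (-2) (Negz i) j =
    if j == i then j.+1%:R *: prod (Negz j.+1) a x else 0.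
  rewrite /borcherds_rterm !prod_vacl (_ : (-2 + Negz i - j%:Z == -1) = false); last first.
    by apply/eqP; lia.
  rewrite scaler0 subr0; case: (eqVneq j i) => [->|ji].
    rewrite (_ : Negz i + i%:Z == -1); last by apply/eqP; lia.
    rewrite binzN2 mulrA -exprMn mulrNN mulr1 expr1n mul1r pmulrn.
    by rewrite (_ : 0 + -2 - i%:Z = Negz i.+1) //; lia.
  rewrite (_ : (Negz i + j%:Z == -1) = false) ?prod0r ?scaler0 //.
  by apply/eqP; lia.
have := @borcherds a vac x 0 (-2) (Negz i) (maxn (maxn 2 i.+1) (absz N)) (fun j Hj =>
  ltac:(split; [apply: prod_vac_ge0; lia | rewrite prod_vacl; case: eqP => //; lia
               | apply: aN; lia])).
rewrite (big_ord_trunc _ (@borcherds_lterm_m0 _ _ _ _ _)) ?big_ord1; last lia.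
rewrite (@big_ord_trunc _ _ i.+1); first last.
- by move=> j j_gt_i; rewrite rhsE gtn_eqF.
- lia.
rewrite big_ord_recr /= big1 => [|j _]; last by rewrite rhsE ltn_eqF.
rewrite rhsE eqxx add0r /borcherds_lterm binz0n mulr1z scale1r.
by rewrite (_ : 0 + Negz i - 0%N%:Z = Negz i) //; lia.
Qed.

Lemma prod_commutator a b x m k J : (forall j : nat, (J <= j)%N -> prod j%:Z a b = 0) ->
  prod m a (prod k b x) - prod k b (prod m a x) =
  \sum_(j < J) (binz m j)%:~R *: prod (m + k - j%:Z) (prod j%:Z a b) x.
Proof.
move=> abJ; have [Nb bN] := prod_trunc b x; have [Na aN] := prod_trunc a x.
have lhs_trunc j : (J <= j)%N -> borcherds_lterm a b x m 0 k j = 0.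
  by move=> j_geJ; rewrite /borcherds_lterm add0r abJ // prod0l scaler0.
have rhs_m0 j : (1 <= j)%N -> borcherds_rterm a b x m 0 k j = 0.
  by rewrite /borcherds_rterm binz0n; case: j => // j _; rewrite mulr0 scale0r.
have := @borcherds a b x m 0 k (maxn (maxn J 1) (maxn (absz (Nb - k)) (absz (Na - m))))
  (fun j Hj => ltac:(split; [rewrite add0r; apply: abJ; lia
                            | apply: bN; lia | apply: aN; lia])).
rewrite (big_ord_trunc _ lhs_trunc); last lia.
rewrite (big_ord_trunc _ rhs_m0) ?big_ord1; last lia.
rewrite /borcherds_rterm /= binz0n mulr1 !addr0 !add0r ?subr0 mulr1z expr0 !scale1r => <-.
by apply: eq_bigr => j _; rewrite /borcherds_lterm add0r.
Qed.

Lemma prod0_vNO a b x J :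
    (forall j : nat, (J <= j)%N -> prod j%:Z a x = 0 /\ prod j%:Z b x = 0) ->
  prod 0 (vNO prod a b) x =
  \sum_(j < J) (prod (Negz j) a (prod j%:Z b x) + prod (Negz j) b (prod j%:Z a x)).
Proof.
move=> xJ; have [N abN] := prod_trunc a b.
have rhs_trunc j : (J <= j)%N -> borcherds_rterm a b x 0 (-1) 0 j = 0.
  by move=> /xJ[ax bx]; rewrite /borcherds_rterm !add0r ax bx !prod0r scaler0 subr0 scaler0.
have := @borcherds a b x 0 (-1) 0 (maxn J (absz N).+1)
  (fun j Hj => ltac:(split; [apply: abN; lia | rewrite add0r; apply: (xJ j _).2; lia
                            | rewrite add0r; apply: (xJ j _).1; lia])).
rewrite (big_ord_trunc _ (@borcherds_lterm_m0 _ _ _ _ _)) ?big_ord1; last lia.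
rewrite (big_ord_trunc _ rhs_trunc); last lia.
rewrite /borcherds_lterm binz0n /= mulr1z scale1r addr0 => ->.
apply: eq_bigr => j _; rewrite /borcherds_rterm binzN1 -exprMn mulrNN mulr1 expr1n.
rewrite mulr1z scale1r expr1 scaleN1r opprK !add0r.
by rewrite (_ : -1 - j%:Z = Negz j) //; lia.
Qed.

Lemma vD_prod0 a x : D (prod 0 a x) = prod 0 a (D x).
Proof. by rewrite D_prod scale0r subr0. Qed.

Lemma iter_vD_prod0 m a x : iter m D (prod 0 a x) = prod 0 a (iter m D x).
Proof. by elim: m => //= m ->; rewrite vD_prod0. Qed.

Lemma iter_vDD m x y : iter m D (x + y) = iter m D x + iter m D y.
Proof. by elim: m => //= m ->; rewrite vDD. Qed.

Lemma iter_vDZ m k x : iter m D (k *: x) = k *: iter m D x.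
Proof. by elim: m => //= m ->; rewrite vDZ. Qed.

Lemma iter_vDN m x : iter m D (- x) = - iter m D x.
Proof. by elim: m => //= m ->; rewrite vDN. Qed.

Lemma iter_vD0 m : iter m D 0 = 0.
Proof. by elim: m => //= m ->; rewrite vD0. Qed.

(* [cmode a i] is the creation mode [a_(-i-1)]. *)
Definition cmode a (i : nat) y := prod (Negz i) a y.

Lemma cmodeD a i x y : cmode a i (x + y) = cmode a i x + cmode a i y.
Proof. exact: prodDr. Qed.
Lemma cmodeZ a i k y : cmode a i (k *: y) = k *: cmode a i y.
Proof. exact: prodZr. Qed.
Lemma cmodeN a i y : cmode a i (- y) = - cmode a i y.
Proof. exact: prodNr. Qed.
Lemma cmode0 a i : cmode a i 0 = 0.
Proof. exact: prod0r. Qed.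

Lemma vNOE a y : vNO prod a y = cmode a 0 y.
Proof. by []. Qed.

Lemma cmode0_vac a : cmode a 0 vac = a.
Proof. exact: prodN1_vac. Qed.

Lemma intr_Negz i : (Negz i)%:~R = - i.+1%:R :> K.
Proof. by rewrite NegzE mulrNz pmulrn. Qed.

Lemma vD_cmode a i y : D (cmode a i y) = cmode a i (D y) + i.+1%:R *: cmode a i.+1 y.
Proof.
by rewrite /cmode D_prod (_ : Negz i - 1 = Negz i.+1) ?intr_Negz ?scaleNr ?opprK //; lia.
Qed.

Lemma cmode_vD a i y : cmode (D a) i y = i.+1%:R *: cmode a i.+1 y.
Proof. exact: prod_D_Negz. Qed.

Lemma vDE a : D a = cmode a 1 vac.
Proof. by rewrite -{1}(cmode0_vac a) vD_cmode vD_vac cmode0 add0r scale1r. Qed.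

Lemma cmode_vacE a i b : cmode a i b = cmode a i (cmode b 0 vac).
Proof. by rewrite cmode0_vac. Qed.

Lemma prod0_vNO_diag a J : (forall j : nat, (J <= j)%N -> prod j%:Z a a = 0) ->
  prod 0 (vNO prod a a) a = 2%:R *: \sum_(j < J) cmode a j (prod j%:Z a a).
Proof.
move=> aJ; rewrite (@prod0_vNO _ _ _ J) => [|j /aJ //]; rewrite scaler_sumr.
by apply: eq_bigr => j _; rewrite scaler_nat mulr2n.
Qed.

(* The hypotheses say that [b] is primary of weight [h] for the Virasoro field [a]. *)
Lemma cmode_primary_comm a b (h : K) i j y :
    prod 0 a b = D b -> prod 1 a b = h *: b ->
    (forall l : nat, (2 <= l)%N -> exists k : K, prod l%:Z a b = k *: vac) ->
  cmode b j (cmode a i y) =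
  cmode a i (cmode b j y) - ((i + j).+2%:R - h * i.+1%:R) *: cmode b (i + j).+2 y.
Proof.
move=> ab0 ab1 ab_central; have [N abN] := prod_trunc a b.
have lterm_high l : (2 <= l)%N ->
    (binz (Negz i) l)%:~R *: prod (Negz i + Negz j - l%:Z) (prod l%:Z a b) y = 0.
  move=> /ab_central[k ->]; rewrite prodZl prod_vacl.
  by rewrite (_ : (_ == -1) = false) ?scaler0 //; apply/eqP; lia.
have := @prod_commutator a b y (Negz i) (Negz j) (maxn 2 (absz N))
  (fun l l_ge => abN l ltac:(lia)).
rewrite (big_ord_trunc _ lterm_high); last lia.
rewrite big_ord_recr big_ord1 /= binz0 binz1 ab0 ab1 prodZl prod_D_Negz subn0.
rewrite (_ : Negz i + Negz j - 1%Z = Negz (i + j).+2); last lia.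
rewrite intr_Negz !scalerA -scalerDl mul1r /cmode => commE.
rewrite (_ : _ - h * _ = (i + j).+2%:R + - i.+1%:R * h); last by ring.
by rewrite -commE opprB addrC subrK.
Qed.

Section W3.
Variables (c : K) (L W : V).
Hypothesis HW3 : W3_relations vac prod c L W.

Lemma cmode_W_L i j y :
  cmode W j (cmode L i y) =
  cmode L i (cmode W j y) - ((i + j).+2%:R - 3%:R * i.+1%:R) *: cmode W (i + j).+2 y.
Proof.
case: HW3 => _ [LW1 LW0 LW_ge2] _; apply: cmode_primary_comm => // l l_ge2.
by exists 0; rewrite LW_ge2 ?scale0r //; lia.
Qed.

Lemma cmode_L_L i j y :
  cmode L j (cmode L i y) =
  cmode L i (cmode L j y) - ((i + j).+2%:R - 2%:R * i.+1%:R) *: cmode L (i + j).+2 y.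
Proof.
case: HW3 => [[LL3 LL2 LL1 LL0 LL_ge4]] _ _; apply: cmode_primary_comm => // l.
case: l => [|[|[|[|l]]]] // _; first by exists 0; rewrite LL2 scale0r.
  by exists (c / 2%:R).
by exists 0; rewrite LL_ge4 ?scale0r //; lia.
Qed.

Lemma prod0_vNO_WW_W :
  prod 0 (vNO prod W W) W = 2%:R *: \sum_(j < 6) cmode W j (prod j%:Z W W).
Proof.
case: HW3 => _ _ [_ _ _ WW_ge6]; apply: prod0_vNO_diag => j j_ge6.
by apply: WW_ge6; lia.
Qed.

Definition W3_identity_lhs (n : nat) : V :=
  let D := vD vac prod in
  let NO := vNO prod in
  let den := 22%:R + 5%:R * c in
  prod 0 (NO W W) (iter n.-1 D W)
  - (64%:R / den) *: iter n D (NO L (NO L W))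
  + (64%:R / den) *: iter n.-1 D (NO (D L) (NO L W))
  - (10%:R * (14%:R + c) / (3%:R * den)) *: iter n.+2 D (NO L W)
  + ((86%:R + 5%:R * c) / den) *: iter n.+1 D (NO (D L) W)
  - ((26%:R + 3%:R * c) / den) *: iter n D (NO (iter 2 D L) W)
  + (2%:R * (c - 2%:R) / (3%:R * den)) *: iter n.-1 D (NO (iter 3 D L) W)
  - ((- 186%:R + 11%:R * c + c ^+ 2) / (36%:R * den)) *: iter n.+4 D W.

Lemma W3_identity_lhsS m : W3_identity_lhs m.+1 = iter m D (W3_identity_lhs 1).
Proof.
rewrite /W3_identity_lhs /= -!iterS !iterSr.
by rewrite !(iter_vDD, iter_vDZ, iter_vDN) iter_vD_prod0.
Qed.

Lemma W3_identity_lhs1 : [pchar K] =i pred0 -> 22%:R + 5%:R * c != 0 ->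
  W3_identity_lhs 1 = 0.
Proof.
move=> charK0 den_neq0; case: HW3 => _ _ [[WW5 WW4 WW3 WW2] WW1 WW0 _].
rewrite /W3_identity_lhs /= prod0_vNO_WW_W !big_ord_recr big_ord0 /=.
rewrite WW5 WW4 WW3 WW2 WW1 WW0 /= !vNOE !cmode_vD (vDE L) (vDE W).
rewrite !(cmodeD, cmodeZ, cmodeN, cmode0) !(cmode_vacE _ _ L) !(cmode_vacE _ _ W).
rewrite !(vD_cmode, vD_vac, vDD, vDZ, vDN, vD0, cmodeD, cmodeZ, cmodeN, cmode0).
rewrite !(cmode_W_L, cmodeD, cmodeZ, cmodeN, cmode0).
rewrite !(cmode_L_L 1 0, cmodeD, cmodeZ, cmodeN, cmode0).
rewrite ?(scaler0, add0r, addr0, subr0, sub0r, oppr0).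
(* Everything is now a combination of seven ordered monomials; compare coefficients. *)
pose v (i : 'I_7) := [:: cmode L 1 (cmode L 0 (cmode W 0 vac));
  cmode L 0 (cmode L 0 (cmode W 1 vac)); cmode L 1 (cmode W 2 vac);
  cmode L 0 (cmode W 3 vac); cmode W 5 vac; cmode L 3 (cmode W 0 vac);
  cmode L 2 (cmode W 1 vac)]`_i.
rewrite -[cmode L 1 (cmode L 0 (cmode W 0 vac))](lincomb_delta v (@Ordinal 7 0 isT)).
rewrite -[cmode L 0 (cmode L 0 (cmode W 1 vac))](lincomb_delta v (@Ordinal 7 1 isT)).
rewrite -[cmode L 1 (cmode W 2 vac)](lincomb_delta v (@Ordinal 7 2 isT)).
rewrite -[cmode L 0 (cmode W 3 vac)](lincomb_delta v (@Ordinal 7 3 isT)).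
rewrite -[cmode W 5 vac](lincomb_delta v (@Ordinal 7 4 isT)).
rewrite -[cmode L 3 (cmode W 0 vac)](lincomb_delta v (@Ordinal 7 5 isT)).
rewrite -[cmode L 2 (cmode W 1 vac)](lincomb_delta v (@Ordinal 7 6 isT)).
do ![rewrite -lincombD | rewrite -lincombZ | rewrite -lincombN].
rewrite -(lincomb0 v); congr lincomb; apply/rowP => i; rewrite !mxE.
have natK_neq0 k : k.+1%:R != 0 :> K by rewrite ((pcharf0P K).1 charK0).
by case: i => [[|[|[|[|[|[|[|i]]]]]]] //= _]; field; rewrite den_neq0 !natK_neq0.
Qed.

End W3.
End VertexAlgebra.

Lemma W3_den_neq0 (K : fieldType) (c : K) :
  5%:R != 0 :> K -> c != - (22%:R / 5%:R) -> 22%:R + 5%:R * c != 0.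
Proof.
move=> five_neq0; apply: contra => /eqP den0; apply/eqP; apply: (mulfI five_neq0).
rewrite mulrN mulrCA divff // mulr1; apply/eqP.
by rewrite -addr_eq0 addrC den0.
Qed.

Theorem lemma7p2 (K : fieldType) (HK : [pchar K] =i pred0) (V : lmodType K)
  (vac : V) (prod : int -> V -> V -> V) (HVA : vertex_algebra vac prod)
  (c : K) (Hc : c != - (22%:R / 5%:R)) (L W : V)
  (HW3 : W3_relations vac prod c L W)
  (Hgen : strongly_generated vac prod [:: L; W])
  (n : nat) (Hn : (1 <= n)%N) :
  let D := vD vac prod in
  let NO := vNO prod in
  let den := 22%:R + 5%:R * c in
  prod 0 (NO W W) (iter n.-1 D W)
  - (64%:R / den) *: iter n D (NO L (NO L W))
  + (64%:R / den) *: iter n.-1 D (NO (D L) (NO L W))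
  - (10%:R * (14%:R + c) / (3%:R * den)) *: iter n.+2 D (NO L W)
  + ((86%:R + 5%:R * c) / den) *: iter n.+1 D (NO (D L) W)
  - ((26%:R + 3%:R * c) / den) *: iter n D (NO (iter 2 D L) W)
  + (2%:R * (c - 2%:R) / (3%:R * den)) *: iter n.-1 D (NO (iter 3 D L) W)
  - ((- 186%:R + 11%:R * c + c ^+ 2) / (36%:R * den)) *: iter n.+4 D W = 0.
Proof.
have den_neq0 : 22%:R + 5%:R * c != 0.
  by apply: W3_den_neq0 Hc; rewrite ((pcharf0P K).1 HK).
case: n Hn => // m _.
have := W3_identity_lhsS HVA c L W m.
by rewrite (W3_identity_lhs1 HVA HW3 HK den_neq0) iter_vD0.
Qed.
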